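(* Let $\sigma=(a_1,\ldots,a_s)$ be a partition of $r$ and let $H=H(n,r,q\mid\sigma)$ with $n\ge s$ and $q\ge r$. If $r\mid q$, then $H$ has a perfect matching.
   Context: A $\sigma$-hypergraph $H=H(n,r,q\mid\sigma)$, for a partition $\sigma=(a_1,\ldots,a_s)$ of $r$ with $s$ parts, is the $r$-uniform hypergraph whose vertex set is the disjoint union of $n$ classes $V_1,\ldots,V_n$, each of size $q$; an $r$-subset $K$ of vertices is an edge iff the multiset of non-zero values $|K\cap V_i|$ equals $\sigma$. A perfect matching is a set of pairwise vertex-disjoint edges covering every vertex. *)

From mathcomp Require Import all_boot.
Set Implicit Arguments. Unset Strict Implicit. Unset Printing Implicit Defensive.

(* Vertices of H(n,r,q|sigma): pairs (i, j) with i : 'I_n the class index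
   and j : 'I_q the position inside the class V_i. *)
Definition sigvert (n q : nat) := ('I_n * 'I_q)%type.

Definition vclass (n q : nat) (i : 'I_n) : {set sigvert n q} :=
  [set v | v.1 == i].

Definition is_partition (sigma : seq nat) (r : nat) : Prop :=
  all (fun a => 0 < a) sigma /\ sumn sigma = r.

Definition sigma_edge (n r q : nat) (sigma : seq nat) (K : {set sigvert n q}) : bool :=
  (#|K| == r) &&
  perm_eq [seq c <- [seq #|K :&: @vclass n q i| | i <- enum 'I_n] | c != 0] sigma.

Definition perfect_matching (n r q : nat) (sigma : seq nat)
    (M : {set {set sigvert n q}}) : Prop :=
  [/\ forall K, K \in M -> @sigma_edge n r q sigma K,
      trivIset M &
      cover M = [set: sigvert n q]].

From mathcomp Require Import all_boot zify.

(* Let [L] be the word of length [r] listing the part index [k] exactly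
   [sigma_k] times.  Cut every class [V_i] into [q / r] blocks of [r]
   consecutive positions; in block [t], the vertex at offset [p] of class
   [c + L_p] (mod [n]) is put in edge [(c, t)].  Each edge then meets class
   [c + k] in exactly [sigma_k] vertices, so it is a sigma-edge, and the
   edges, being the fibres of the labelling [v |-> (c, t)], partition the
   vertex set. *)

Lemma modn_double x n : x < n + n -> x %% n = if x < n then x else x - n.
Proof.
move=> lt_x_2n; case: ltnP => le_n_x; first by rewrite modn_small.
by rewrite -{1}(subnK le_n_x) modnDr modn_small //; lia.
Qed.

Definition modsub (n c i : nat) := (i + n - c) %% n.

Section ModSub.

Variable n : nat.

Lemma modsub_eq a i c : a < n -> i < n -> c < n ->
  (modsub n a i == c) = (a == modsub n c i).
Proof.
move=> ha hi hc; rewrite /modsub (@modn_double (i + n - a)) 1?(@modn_double (i + n - c)); try lia.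
by case: ifP => h1; case: ifP => h2; apply/eqP/eqP; lia.
Qed.

Lemma perm_modsub c : c < n ->
  perm_eq [seq modsub n c i | i <- iota 0 n] (iota 0 n).
Proof.
move=> hc.
have uniq_shift : uniq [seq modsub n c i | i <- iota 0 n].
  rewrite map_inj_in_uniq ?iota_uniq // => a b; rewrite !mem_iota !add0n => ha hb.
  rewrite /modsub (@modn_double (a + n - c)) 1?(@modn_double (b + n - c)); try lia.
  by case: ifP => h1; case: ifP => h2; lia.
apply: (uniq_perm uniq_shift (iota_uniq 0 n)).
have [] // := uniq_min_size uniq_shift (s2 := iota 0 n).
- by move=> y /mapP [a _ ->]; rewrite mem_iota add0n ltn_pmod //; lia.
- by rewrite size_map size_iota.
Qed.

End ModSub.

Definition nat_tally_seq (sigma : seq nat) :=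
  tally_seq [seq (k, nth 0 sigma k) | k <- iota 0 (size sigma)].

Lemma count_nat_tally_seq sigma d :
  count (pred1 d) (nat_tally_seq sigma) = nth 0 sigma d.
Proof.
rewrite /nat_tally_seq /tally_seq count_flatten -map_comp sumnE big_map.
have -> : iota 0 (size sigma) = index_iota 0 (size sigma) by rewrite /index_iota subn0.
rewrite big_map (eq_bigr (fun k => if k == d then nth 0 sigma k else 0)).
  rewrite -big_mkcond big_nat1_eq /=.
  by case: ltnP => // /(nth_default 0) ->.
by move=> k _; rewrite /= count_nseq /= eq_sym; case: (d == k); rewrite ?mul1n.
Qed.

Lemma size_nat_tally_seq sigma : size (nat_tally_seq sigma) = sumn sigma.
Proof.
rewrite size_tally_seq /unzip2 -map_comp.
by rewrite (eq_map (g := nth 0 sigma)) // -/(mkseq _ _) mkseq_nth.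
Qed.

Lemma mem_nat_tally_seq sigma x : x \in nat_tally_seq sigma -> x < size sigma.
Proof.
move/flatten_mapP => [_ /mapP [k + ->]] /nseqP [-> _].
by rewrite mem_iota.
Qed.

Lemma map_nth_iota_pad (s : seq nat) n : size s <= n ->
  map (nth 0 s) (iota 0 n) = s ++ nseq (n - size s) 0.
Proof.
move=> le_s_n; rewrite -(subnKC le_s_n) iotaD map_cat add0n.
rewrite -/(mkseq _ _) mkseq_nth addKn; congr (_ ++ _).
have /all_pred1P -> : all (pred1 0) (map (nth 0 s) (iota (size s) (n - size s))).
  by apply/allP => _ /mapP [k + ->]; rewrite mem_iota => /andP[le_s_k _]; rewrite /= nth_default.
by rewrite size_map size_iota.
Qed.

Lemma count_div_block (P : pred nat) r t q : 0 < r -> t * r + r <= q ->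
  count (fun j => (j %/ r == t) && P (j %% r)) (iota 0 q) = count P (iota 0 r).
Proof.
move=> r_gt0 le_block_q.
rewrite -(subnKC le_block_q) !iotaD !count_cat !add0n.
rewrite (@eq_in_count _ _ pred0 (iota 0 _)); last first.
  move=> j; rewrite mem_iota => /andP[_ lt_j] /=.
  by rewrite ltn_eqF ?ltn_divLR.
rewrite (@eq_in_count _ _ pred0 (iota (t * r + r) _)); last first.
  move=> j; rewrite mem_iota => /andP[le_j _] /=.
  by rewrite gtn_eqF // leq_divRL // mulSn addnC.
rewrite !count_pred0 add0n addn0 -[t * r]addn0 iotaDl count_map.
apply: eq_in_count => p; rewrite mem_iota add0n => lt_p_r /=.
by rewrite modnMDl modn_small // divnMDl // divn_small // addn0 eqxx.
Qed.

Lemma card_setI_vclass n q (K : {set sigvert n q}) (i : 'I_n) (P : pred nat) :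
  (forall j : 'I_q, ((i, j) \in K) = P j) ->
  #|K :&: vclass q i| = count P (iota 0 q).
Proof.
move=> memK.
have -> : K :&: vclass q i = pair i @: [set j : 'I_q | P j].
  apply/setP => [[i' j]]; rewrite !inE; apply/andP/imsetP.
    by move=> [Kij /eqP /= eq_i]; subst i'; exists j => //; rewrite inE -memK.
  by move=> [j' + [-> ->]]; rewrite inE -memK.
rewrite card_imset; last by move=> a b [].
rewrite cardE /enum_mem size_filter -enumT -val_enum_ord count_map.
by apply: eq_count => j; rewrite /= inE.
Qed.

Lemma card_sumn_vclass n q (K : {set sigvert n q}) :
  #|K| = sumn [seq #|K :&: vclass q i| | i <- enum 'I_n].
Proof.
rewrite sumnE big_map big_enum /= -sum1_card.
rewrite (partition_big (fun v : sigvert n q => v.1) predT) //=.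
apply: eq_bigr => i _; rewrite -sum1_card; apply: eq_bigl => v.
by rewrite !inE.
Qed.

Lemma sigma_edge_shuffle n r q sigma (K : {set sigvert n q}) (f : nat -> nat) :
  is_partition sigma r -> size sigma <= n ->
  perm_eq [seq f i | i <- iota 0 n] (iota 0 n) ->
  (forall i : 'I_n, #|K :&: vclass q i| = nth 0 sigma (f i)) ->
  sigma_edge r sigma K.
Proof.
move=> [sigma_pos sum_sigma] le_sigma_n perm_f cardK.
have perm_counts : perm_eq [seq #|K :&: vclass q i| | i <- enum 'I_n]
                           (sigma ++ nseq (n - size sigma) 0).
  rewrite (eq_map cardK) (map_comp (nth 0 sigma \o f) val) val_enum_ord.
  by rewrite map_comp -map_nth_iota_pad //; apply: perm_map.
apply/andP; split.
  by rewrite card_sumn_vclass (perm_sumn perm_counts) sumn_cat sumn_nseq mul0n addn0 sum_sigma.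
rewrite (perm_trans (perm_filter _ perm_counts)) // filter_cat filter_nseq cats0.
suff -> : [seq c <- sigma | c != 0] = sigma by [].
by apply/all_filterP; apply: sub_all sigma_pos => a; rewrite lt0n.
Qed.

Lemma sigvert_gt0 {n q} (v : sigvert n q) : 0 < n /\ 0 < q.
Proof. by case: v => [[i lt_i_n] [j lt_j_q]]; split; [move: lt_i_n | move: lt_j_q]; apply: leq_ltn_trans. Qed.

Definition block_label {n q} (r : nat) (L : seq nat) (v : sigvert n q) : nat * nat :=
  (modsub n (nth 0 L (v.2 %% r)) v.1, v.2 %/ r).

Section BlockFibres.

Variables (n r q : nat) (sigma : seq nat).
Hypotheses (sum_sigma : sumn sigma = r) (le_sigma_n : size sigma <= n) (r_dvd_q : r %| q).

Let label := block_label r (nat_tally_seq sigma) : sigvert n q -> nat * nat.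

Lemma card_label_fibre (x : sigvert n q) (i : 'I_n) :
  #|[set y in [set: sigvert n q] | label x == label y] :&: vclass q i|
    = nth 0 sigma (modsub n (label x).1 i).
Proof.
have [n_gt0 q_gt0] := sigvert_gt0 x.
have r_gt0 : 0 < r := dvdn_gt0 q_gt0 r_dvd_q.
pose L := nat_tally_seq sigma; pose c := (label x).1; pose t := (label x).2.
have size_L : size L = r by rewrite size_nat_tally_seq.
have L_lt_n p : nth 0 L p < n.
  have [lt_p_L | ?] := ltnP p (size L); last by rewrite nth_default.
  by apply: leq_trans le_sigma_n; apply: mem_nat_tally_seq; rewrite mem_nth.
have block_fits : t * r + r <= q.
  by rewrite addnC -mulSn -(divnK r_dvd_q) leq_mul2r ltn_divLR // divnK // ltn_ord orbT.
rewrite (@card_setI_vclass n q _ i (fun j => (j %/ r == t) && (modsub n (nth 0 L (j %% r)) i == c))).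
  rewrite (count_div_block (fun p => modsub n (nth 0 L p) i == c)) //.
  rewrite -count_nat_tally_seq -/L -[in RHS](mkseq_nth 0 L) size_L count_map.
  apply: eq_in_count => p _; apply: modsub_eq => //.
  by rewrite ltn_pmod.
move=> j; rewrite !inE -[label x]/(c, t) xpair_eqE.
by rewrite /= andbC [c == _]eq_sym [t == _]eq_sym.
Qed.

End BlockFibres.

Theorem lemma3p3 (n r q : nat) (sigma : seq nat) :
  is_partition sigma r ->
  size sigma <= n ->
  r <= q ->
  r %| q ->
  exists M : {set {set sigvert n q}}, @perfect_matching n r q sigma M.
Proof.
(* [r <= q] is redundant: it follows from [r %| q] when [0 < q], and for [q = 0]
   there are no vertices. *)
move=> partition_sigma le_sigma_n _ r_dvd_q.
have [_ sum_sigma] := partition_sigma.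
pose label := block_label r (nat_tally_seq sigma) : sigvert n q -> nat * nat.
exists (preim_partition label [set: sigvert n q]).
have /and3P [/eqP cover_M triv_M _] := preim_partitionP label [set: sigvert n q].
split=> // _ /imsetP [x _ ->].
have [n_gt0 _] := sigvert_gt0 x.
apply: (@sigma_edge_shuffle _ _ _ _ _ (modsub n (label x).1)) => //.
- by apply: perm_modsub; rewrite ltn_pmod.
- by move=> i; apply: card_label_fibre.
Qed.
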